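(* Let $G=(V,E)$ be a finite simple graph with nonempty vertex set and burning number $b(G)$. Consider the following procedure (Algorithm 1), which receives $G$ and $b(G)$ as input. Choose $s_1\in V$ arbitrarily. For $i=2,\dots,b(G)$, let $s_i$ be any vertex $u\in V$ maximizing $d(u,\{s_1,\dots,s_{i-1}\})$ (ties broken arbitrarily). For $i=b(G)+1,\dots,3b(G)-2$, let $s_i$ be an arbitrary vertex of $V$. Then, for every choice made by this procedure, the sequence $(s_1,\dots,s_k)$ with $k=3b(G)-2$ is a burning sequence of $G$, i.e. $\bigcup_{i=1}^{k} N_{k-i}[s_i]=V$. Consequently its length $3b(G)-2$ is at most $3-2/b(G)$ times the burning number, i.e. Algorithm 1 is a $(3-2/b(G))$-approximation algorithm for the graph burning problem.
   Context: For vertices $u,v$ of $G$, $d(u,v)$ is the number of edges on a shortest $u$–$v$ path ($+\infty$ if none exists), and for $S\subseteq V$, $d(u,S)=\min_{w\in S}d(u,w)$. For $v\in V$ and an integer $r\ge 0$, $N_r[v]=\{u\in V: d(u,v)\le r\}$ is the closed $r$-th neighborhood of $v$ (so $N_0[v]=\{v\}$). A burning sequence of length $k$ is a sequence $(s_1,\dots,s_k)$ of vertices of $G$ (repetitions allowed) such that $\bigcup_{i=1}^{k}N_{k-i}[s_i]=V$. The burning number $b(G)$ is the minimum length of a burning sequence of $G$. *)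

(* A finite simple graph is a symmetric irreflexive e : rel T
   on a nonempty finType T. *)
From mathcomp Require Import all_boot all_order all_algebra.
Set Implicit Arguments. Unset Strict Implicit. Unset Printing Implicit Defensive.

Section Burning.
Variables (T : finType) (e : rel T).

Definition dist_le (u v : T) (r : nat) : Prop :=
  exists p : seq T, [/\ path e u p, last u p = v & size p <= r].

Definition nbhd (v : T) (r : nat) : T -> Prop := fun u => dist_le u v r.

Definition distS_le (u : T) (S : seq T) (r : nat) : Prop :=
  exists2 w, w \in S & dist_le u w r.

(* d(u1,S) <= d(u2,S) as extended naturals (+oo when no path exists):
   every bound r on d(u2,S) is also a bound on d(u1,S). *)
Definition distS_leq (u1 : T) (S : seq T) (u2 : T) : Prop :=
  forall r, distS_le u2 S r -> distS_le u1 S r.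

(* (s_1,...,s_k) is a burning sequence: \bigcup_{i=1}^k N_{k-i}[s_i] = V.
   With 0-based index i, s_{i+1} = nth _ s i and radius k - (i+1). *)
Definition is_burning_seq (s : seq T) : Prop :=
  forall x : T, exists2 i, i < size s & nbhd (nth x s i) (size s - i.+1) x.

Definition burning_number (n : nat) : Prop :=
  (exists2 s : seq T, size s = n & is_burning_seq s) /\
  (forall s : seq T, is_burning_seq s -> n <= size s).

End Burning.

From mathcomp Require Import all_boot all_order all_algebra.
From mathcomp Require Import zify.
Set Implicit Arguments. Unset Strict Implicit. Unset Printing Implicit Defensive.
Import GRing.Theory Num.Theory.
Local Open Scope ring_scope.

(* An optimal burning sequence (t_1,...,t_b) covers V by b clusters
   N_{b-j}[t_j], each of diameter at most 2b-2.  Given a vertex u, two of the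
   b+1 vertices s_1,...,s_b,u lie in a common cluster.  If these are s_p and
   u, then u is within 2b-2 of s_p.  If they are s_p and s_q with p < q, then
   s_q is within 2b-2 of {s_1,...,s_(q-1)}, so by the farthest-first choice of
   s_q the vertex u is too.  Either way u is within 2b-2 of some s_i with
   i <= b, and the radius 3b-2-i of s_i is at least 2b-2. *)

Lemma pigeonhole_nth (T : Type) (A : finType) (f : T -> A) x0 (xs : seq T) :
  (#|A| < size xs)%N ->
  exists p q, (p < q < size xs)%N /\ f (nth x0 xs p) = f (nth x0 xs q).
Proof.
move=> small_A; have : ~~ uniq (map f xs).
  apply/negP=> /card_uniqP card_fxs.
  by have := max_card (mem (map f xs)); rewrite card_fxs size_map leqNgt small_A.
case/(uniqPn (f x0)) => p [q [lt_pq]]; rewrite size_map => lt_qxs.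
rewrite !(nth_map x0) // ?(ltn_trans lt_pq) // => eq_f.
by exists p, q; rewrite lt_pq lt_qxs.
Qed.

Section Graph.
Variables (T : finType) (e : rel T).

Lemma dist_le_widen u v r r' : (r <= r')%N -> dist_le e u v r -> dist_le e u v r'.
Proof. by move=> le_rr' [p [pth lst sz]]; exists p; split=> //; apply: leq_trans le_rr'. Qed.

Lemma dist_le_trans u v w r1 r2 :
  dist_le e u v r1 -> dist_le e v w r2 -> dist_le e u w (r1 + r2).
Proof.
move=> [p [pth1 lst1 sz1]] [q [pth2 lst2 sz2]]; exists (p ++ q).
by rewrite cat_path last_cat lst1 pth1 pth2 size_cat leq_add.
Qed.

Hypothesis e_sym : symmetric e.

Lemma dist_le_sym u v r : dist_le e u v r -> dist_le e v u r.
Proof.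
move=> [p [pth lst sz]]; exists (rev (belast u p)); split.
- by rewrite -lst rev_path; apply: sub_path pth => x y; rewrite /= e_sym.
- by case: {pth sz} p lst => [|x p] //= <-; rewrite rev_cons last_rcons.
- by rewrite size_rev size_belast.
Qed.

Lemma burning_seq_clusters t : is_burning_seq e t ->
  exists cl : T -> 'I_(size t),
    forall x y, cl x = cl y -> dist_le e x y (2 * (size t).-1).
Proof.
move=> burn_t.
have [cl cl_near] : exists cl : T -> 'I_(size t),
    forall x, dist_le e x (nth x t (cl x)) (size t - (cl x).+1).
  apply: (@fin_all_exists _ (fun=> 'I_(size t))
    (fun x (i : 'I_(size t)) => dist_le e x (nth x t i) (size t - i.+1))) => x.
  by have [i lt_it near_x] := burn_t x; exists (Ordinal lt_it).
exists cl => x y cl_xy.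
have near_y := cl_near y; rewrite -cl_xy (set_nth_default x) // in near_y.
apply: dist_le_widen (dist_le_trans (cl_near x) (dist_le_sym near_y)); lia.
Qed.

Lemma farthest_first_prefix_cover t s :
  is_burning_seq e t -> (size t <= size s)%N ->
  (forall i, (0 < i < size t)%N ->
     forall w, distS_leq e w (take i s) (nth w s i)) ->
  forall u, distS_le e u (take (size t) s) (2 * (size t).-1).
Proof.
set b := size t => burn_t le_bs farthest u.
have [cl cl_diam] := burning_seq_clusters burn_t.
pose pts := rcons (take b s) u.
have size_pts : size pts = b.+1 by rewrite size_rcons size_takel.
have [p [q [/andP [lt_pq lt_q_pts] /cl_diam near_pq]]] : exists p q,
    (p < q < size pts)%N /\ cl (nth u pts p) = cl (nth u pts q).
  by apply: pigeonhole_nth; rewrite card_ord size_pts.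
rewrite size_pts ltnS in lt_q_pts.
have pts_nth i : (i < b)%N -> nth u pts i = nth u s i.
  by move=> lt_ib; rewrite nth_rcons size_takel // lt_ib nth_take.
have sp_take i : (p < i <= b)%N -> nth u s p \in take i s.
  by case/andP=> lt_pi le_ib; rewrite -(nth_take u lt_pi) mem_nth // size_takel ?(leq_trans le_ib).
rewrite pts_nth in near_pq; last lia.
case: (ltngtP q b) lt_q_pts => // [lt_qb | eq_qb] _.
- have [w w_in near_u] : distS_le e u (take q s) (2 * b.-1).
    apply: (farthest q _ u); first lia.
    exists (nth u s p); first by apply: sp_take; lia.
    by rewrite -pts_nth //; apply: dist_le_sym.
  exists w => //; rewrite -(take_takel s (ltnW lt_qb)) in w_in.
  exact: mem_take w_in.
- exists (nth u s p); first by apply: sp_take; lia.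
  by move: near_pq; rewrite eq_qb nth_rcons size_takel // ltnn eqxx => /dist_le_sym.
Qed.

End Graph.

Lemma prefix_cover_burning_seq (T : finType) (e : rel T) (s : seq T) m :
  (forall x, distS_le e x (take m s) (size s - m)) -> is_burning_seq e s.
Proof.
move=> cover x; have [w w_in near_x] := cover x.
have w_s : w \in s := mem_take w_in.
have lt_wm : (index w s < m)%N := index_ltn w_in.
exists (index w s); first by rewrite index_mem.
by rewrite /nbhd nth_index //; apply: dist_le_widen near_x; lia.
Qed.

Lemma approximation_ratio (R : numFieldType) (b : nat) : (0 < b)%N ->
  (3 * b - 2)%N%:R = (3 - 2 / b%:R) * b%:R :> R.
Proof.
move=> b_gt0; rewrite natrB ?natrM; last lia.
by rewrite mulrBl -mulrA mulVf ?mulr1 // pnatr_eq0 -lt0n.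
Qed.

Theorem theorem1 (T : finType) (e : rel T)
  (e_sym : symmetric e) (e_irr : irreflexive e) (T_nonempty : (0 < #|T|)%N)
  (b : nat) (Hb : burning_number e b)
  (s : seq T) (Hsize : size s = (3 * b - 2)%N)
  (Hmax : forall i : nat, (0 < i < b)%N ->
            forall w : T, distS_leq e w (take i s) (nth w s i)) :
  is_burning_seq e s /\
  ((3 * b - 2)%N%:R <= (3 - 2 / b%:R) * b%:R :> rat).
Proof.
have [[t size_t burn_t] _] := Hb.
have b_gt0 : (0 < b)%N.
  case/card_gt0P: T_nonempty => x _; have [i lt_it _] := burn_t x.
  by rewrite -size_t (leq_ltn_trans _ lt_it).
split; last by rewrite approximation_ratio.
have le_ts : (size t <= size s)%N by rewrite size_t Hsize; lia.
rewrite -size_t in Hmax.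
apply: (@prefix_cover_burning_seq _ _ _ b) => x.
have [w w_in near_x] := farthest_first_prefix_cover e_sym burn_t le_ts Hmax x.
exists w; first by rewrite -size_t.
by apply: dist_le_widen near_x; rewrite Hsize -size_t; lia.
Qed.
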